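(* For every $n\ge 3$, the graph $C_n\times K_2$ is a cubic admissible graph.
   Context: $C_n\times K_2$ is the cartesian product of the cycle of order $n$ with $K_2$ (the prism on $2n$ vertices). A trail is a walk with no repeated edge; its length is its number of edges, and it spans a graph if it contains every vertex. $t(L)$ denotes the length of a longest trail in $L$. A (multi)graph $L$ is admissible if (A-1) $t(L)<|E(L)|$, and (A-2) for each vertex $v\in V(L)$ and each edge $e$ incident with $v$, there is a trail of length $t(L)$ beginning $v,e,\ldots$ which spans $L$. *)

From mathcomp Require Import all_boot.
Set Implicit Arguments. Unset Strict Implicit. Unset Printing Implicit Defensive.

Section Graphs.
Variable T : finType.
Variable adj : rel T.

Definition simple_graph : Prop :=
  symmetric adj /\ irreflexive adj.

Definition edge_of (x y : T) : {set T} := [set x; y].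

Definition edge_set : {set {set T}} :=
  [set edge_of p.1 p.2 | p in [pred p : T * T | adj p.1 p.2]].

Definition cubic : Prop := forall x : T, #|[set y | adj x y]| = 3.

Definition walk_edges (x : T) (p : seq T) : seq {set T} :=
  pairmap edge_of x p.

(* x :: p is a trail: a walk with no repeated edge; its length is size p *)
Definition trail (x : T) (p : seq T) : bool :=
  path adj x p && uniq (walk_edges x p).

Definition spans (x : T) (p : seq T) : bool :=
  [forall v : T, v \in x :: p].

Definition longest_trail_length (t : nat) : Prop :=
  (exists x p, trail x p /\ size p = t) /\
  (forall x p, trail x p -> size p <= t).

Definition admissible : Prop :=
  exists t : nat, longest_trail_length t /\
    t < #|edge_set| /\
    (forall v w : T, adj v w ->
       exists p : seq T, trail v (w :: p) /\ size (w :: p) = t /\ spans v (w :: p)).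

End Graphs.

(* The prism C_n x K_2: vertices (i, b) with i in Z_n, b in K_2;
   (i,b) ~ (j,c) iff (b = c and i, j adjacent on the cycle) or (i = j and b <> c). *)
Definition cyc_adj (n : nat) (i j : 'I_n) : bool :=
  (val j == (val i).+1 %% n) || (val i == (val j).+1 %% n).

Definition prism_adj (n : nat) : rel ('I_n * bool) :=
  fun u v => ((u.2 == v.2) && cyc_adj u.1 v.1) || ((u.1 == v.1) && (u.2 != v.2)).
Arguments cyc_adj : clear implicits.
Arguments prism_adj : clear implicits.

(* In a graph of maximum degree 3 no vertex occurs twice in the interior of a
   trail: the two visits would use four distinct edges at it.  So the interior
   vertices of a trail in the prism are distinct, a trail has at most 2n + 1
   edges, and this is fewer than the 3n edges of the prism.  The rotations of
   C_n and the swap of the two copies of C_n are automorphisms acting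
   transitively on the vertices, so (A-2) only needs to be checked at one
   vertex, where three explicit spanning trails of length 2n + 1, one through
   each incident edge, settle it. *)

From mathcomp Require Import all_boot zify.
Set Implicit Arguments. Unset Strict Implicit. Unset Printing Implicit Defensive.

Lemma path_map_iota (T : Type) (e : rel T) (G : nat -> T) m L :
  (forall k, m <= k < m + L -> e (G k) (G k.+1)) ->
  path e (G m) [seq G i | i <- iota m.+1 L].
Proof.
elim: L m => [|L IHL] m GE //=.
rewrite GE ?IHL //; last lia.
by move=> k hk; apply: GE; lia.
Qed.

Lemma pairmap_map_iota (T T' : Type) (f : T -> T -> T') (G : nat -> T) m L :
  pairmap f (G m) [seq G i | i <- iota m.+1 L] = [seq f (G k) (G k.+1) | k <- iota m L].
Proof. by elim: L m => [|L IHL] m //=; rewrite IHL. Qed.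

Lemma uniq_map_iota (T : eqType) (h : nat -> T) L :
  (forall k l, k < l < L -> h k != h l) -> uniq [seq h k | k <- iota 0 L].
Proof.
move=> hP; rewrite map_inj_in_uniq ?iota_uniq // => k l.
rewrite !mem_iota !add0n => /andP[_ hk] /andP[_ hl] hkl.
by case: (ltngtP k l) => [lt_kl|lt_lk|//]; [move: (hP k l) | move: (hP l k)];
  rewrite hkl eqxx; lia.
Qed.

Lemma uniq_map_nth (T : eqType) (x0 : T) (s : seq T) (idx : seq nat) :
  uniq s -> uniq idx -> all (gtn (size s)) idx -> uniq [seq nth x0 s i | i <- idx].
Proof.
move=> s_uniq idx_uniq /allP idx_lt; rewrite map_inj_in_uniq // => i j hi hj /eqP.
by rewrite (nth_uniq x0 (idx_lt i hi) (idx_lt j hj) s_uniq) => /eqP.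
Qed.

Section Graph.
Variables (T : finType) (adj : rel T).

Definition spanning_trails_at (t : nat) (v : T) : Prop :=
  forall w, adj v w ->
    exists p, trail adj v (w :: p) /\ size (w :: p) = t /\ spans v (w :: p).

Lemma edge_ofC (a b : T) : edge_of a b = edge_of b a.
Proof. by rewrite /edge_of setUC. Qed.

Lemma edge_of_eqE (a b c d : T) :
  (edge_of a b == edge_of c d) = ((a == c) && (b == d)) || ((a == d) && (b == c)).
Proof.
apply/eqP/idP => [E|/orP[]/andP[/eqP-> /eqP->]//]; last exact: edge_ofC.
have mem_cd y : (y \in edge_of a b) = (y \in edge_of c d) by rewrite E.
move: (mem_cd a) (mem_cd b) (esym (mem_cd c)) (esym (mem_cd d)).
rewrite !in_set2 !eqxx ?orbT /=.
by do 4 (move=> /esym /orP[] /eqP ?); subst; rewrite ?eqxx ?orbT.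
Qed.

Lemma nth_walk_edges x p i : i < size p ->
  nth set0 (walk_edges x p) i = @edge_of T (nth x (x :: p) i) (nth x (x :: p) i.+1).
Proof. by move=> i_lt; rewrite /walk_edges (nth_pairmap x). Qed.

Lemma trail_map_iota (G : nat -> T) L :
  (forall k, k < L -> adj (G k) (G k.+1)) ->
  (forall k l, k < l < L -> edge_of (G k) (G k.+1) != edge_of (G l) (G l.+1)) ->
  trail adj (G 0) [seq G i | i <- iota 1 L].
Proof.
move=> G_adj G_edges; apply/andP; split; first exact: path_map_iota.
by rewrite /walk_edges pairmap_map_iota; apply: uniq_map_iota.
Qed.

Lemma walk_edges_sub x p : path adj x p -> {subset walk_edges x p <= edge_set adj}.
Proof.
elim: p x => [|y p IHp] x //= /andP[xy yp] e.
by rewrite inE => /predU1P[->|/IHp]; [apply: (imset_f _ (x := (x, y))) | apply].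
Qed.

Lemma trail_size_lt_edges x p e :
  trail adj x p -> e \in edge_set adj -> e \notin walk_edges x p ->
  size p < #|edge_set adj|.
Proof.
case/andP=> xp uniq_edges e_edge e_new.
have e_uniq : uniq (e :: walk_edges x p) by rewrite /= e_new.
suff : size (e :: walk_edges x p) <= #|edge_set adj| by rewrite /= size_pairmap.
rewrite -(card_uniqP e_uniq); apply/subset_leq_card/subsetP => f.
by rewrite inE => /predU1P[->//|/(walk_edges_sub xp)].
Qed.

Section Automorphism.
Variable f : T -> T.
Hypotheses (f_bij : bijective f) (f_mono : {mono f : x y / adj x y}).

Lemma edge_of_map a b : edge_of (f a) (f b) = f @: edge_of a b.
Proof. by rewrite /edge_of imsetU !imset_set1. Qed.

Lemma walk_edges_map x p :
  walk_edges (f x) (map f p) = [seq f @: (e : {set T}) | e <- walk_edges x p].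
Proof. by elim: p x => [|y p IHp] x //=; rewrite -IHp edge_of_map. Qed.

Lemma trail_map x p : trail adj x p -> trail adj (f x) (map f p).
Proof.
case/andP=> xp uniq_edges; apply/andP; split.
  by rewrite path_map; apply: sub_path xp => y z /=; rewrite f_mono.
by rewrite walk_edges_map map_inj_uniq //; apply/imset_inj/bij_inj.
Qed.

Lemma spans_map x p : spans x p -> spans (f x) (map f p).
Proof.
move=> /forallP xp_all; apply/forallP => v; have [g _ fK] := f_bij.
by rewrite -[v]fK -map_cons map_f.
Qed.

Lemma nbhs_map x : [set y | adj (f x) y] = f @: [set y | adj x y].
Proof.
have [g gK fK] := f_bij.
by apply/setP => y; rewrite -[y]fK mem_imset ?inE ?f_mono //; apply: can_inj gK.
Qed.

Lemma spanning_trails_map t x : spanning_trails_at t x -> spanning_trails_at t (f x).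
Proof.
have [g _ fK] := f_bij.
move=> x_trails w; rewrite -[w]fK f_mono => /x_trails[p [xp [p_size xp_spans]]].
exists (map f p); rewrite -map_cons size_map.
by split; [exact: trail_map | split; last exact: spans_map].
Qed.

End Automorphism.

Section Subcubic.
Hypotheses (adj_sym : symmetric adj) (adj_irr : irreflexive adj).
Hypothesis subcubic : forall v, #|[set y | adj v y]| <= 3.

Lemma size_nbhs_le v (ws : seq T) :
  uniq ws -> all (adj v) ws -> size ws <= #|[set y | adj v y]|.
Proof.
move=> ws_uniq /allP ws_adj; rewrite -(card_uniqP ws_uniq).
by apply/subset_leq_card/subsetP => y /ws_adj; rewrite inE.
Qed.

(* A vertex met at two interior positions k < l would have the four distinct
   trail edges at positions k - 1, k, l - 1 and l. *)
Lemma trail_interior_uniq x p k l : trail adj x p -> 0 < k -> k < l -> l < size p ->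
  nth x (x :: p) k != nth x (x :: p) l.
Proof.
case/andP=> /(pathP x) p_adj edges_uniq k_gt0 lt_kl l_lt; apply/eqP => s_kl.
set s := x :: p in s_kl.
have s_adj i : i < size p -> adj (nth x s i) (nth x s i.+1) by exact: p_adj.
set v := nth x s k.
have lt_Skl : k.+1 < l.
  rewrite ltn_neqAle lt_kl andbT; apply/eqP => Skl.
  by move: (s_adj k (ltn_trans lt_kl l_lt)); rewrite Skl -s_kl adj_irr.
set ws := [:: nth x s k.-1; nth x s k.+1; nth x s l.-1; nth x s l.+1].
have ws_edges : [seq nth set0 (walk_edges x p) i | i <- [:: k.-1; k; l.-1; l]] =
                [seq edge_of v w | w <- ws].
  rewrite /= !nth_walk_edges ?(prednK k_gt0) ?(prednK (ltn_trans k_gt0 lt_kl)) //;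
    try lia.
  by rewrite -/s -s_kl !(edge_ofC _ v).
have ws_uniq : uniq ws.
  apply: (map_uniq (f := edge_of v)); rewrite -ws_edges uniq_map_nth //.
    by rewrite /= !inE; lia.
  by rewrite /= size_pairmap; lia.
have s_adj_prev i : 0 < i -> i <= size p -> adj (nth x s i) (nth x s i.-1).
  by case: i => // i _ i_le; rewrite adj_sym; apply: s_adj.
have ws_adj : all (adj v) ws.
  rewrite /= andbT {3 4}/v s_kl; apply/and4P; split;
    [apply: s_adj_prev | apply: s_adj | apply: s_adj_prev | apply: s_adj]; lia.
by have := size_nbhs_le ws_uniq ws_adj; have := subcubic v; rewrite /=; lia.
Qed.

Lemma trail_size_le x p : trail adj x p -> size p <= #|T|.+1.
Proof.
move=> xp; set interior := [seq nth x (x :: p) k | k <- iota 1 (size p).-1].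
have interior_uniq : uniq interior.
  rewrite map_inj_in_uniq ?iota_uniq // => k l; rewrite !mem_iota => hk hl /eqP.
  by case: (ltngtP k l) => [lt_kl|lt_lk|//];
    [rewrite (negbTE (trail_interior_uniq xp _ lt_kl _))
    |rewrite eq_sym (negbTE (trail_interior_uniq xp _ lt_lk _))]; lia.
have := uniq_leq_size interior_uniq (s2 := enum T) (fun y _ => mem_enum T y).
by rewrite -cardT size_map size_iota; lia.
Qed.

End Subcubic.
End Graph.

Section Prism.
Variable n : nat.
Hypothesis n_gt2 : 2 < n.

Lemma n_gt0 : 0 < n. Proof. lia. Qed.

Definition ord (i : nat) : 'I_n := Ordinal (ltn_pmod i n_gt0).

Definition vtx (u : nat * bool) : 'I_n * bool := (ord u.1, u.2).

Definition origin : 'I_n * bool := vtx (0, false).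

Definition turn (c : nat) (b : bool) (x : 'I_n * bool) : 'I_n * bool :=
  (ord (x.1 + c), x.2 (+) b).

Lemma ord_addr_eq (i j : 'I_n) c : (ord (i + c) == ord (j + c)) = (i == j).
Proof. by rewrite -val_eqE /= eqn_modDr !modn_small. Qed.

Lemma cyc_adj_ord_addr (i j : 'I_n) c :
  cyc_adj n (ord (i + c)) (ord (j + c)) = cyc_adj n i j.
Proof.
have succ_mod m : (m %% n).+1 %% n = m.+1 %% n by rewrite -addn1 modnDml addn1.
by rewrite /cyc_adj /= !succ_mod -!addSn !eqn_modDr !(modn_small (ltn_ord _)).
Qed.

Lemma prism_adj_turn c b : {mono turn c b : x y / prism_adj n x y}.
Proof.
move=> [i d] [j e]; rewrite /prism_adj /= cyc_adj_ord_addr ord_addr_eq.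
by case: b d e => [] [] [].
Qed.

Lemma turn_bij c b : bijective (turn c b).
Proof.
apply: injF_bij => -[i d] [j e] /eqP.
by rewrite xpair_eqE /= ord_addr_eq => /andP[/eqP-> /eqP/addIb->].
Qed.

Lemma turn_origin (v : 'I_n * bool) : turn v.1 v.2 origin = v.
Proof.
case: v => i b; congr (_, _); apply: val_inj.
by rewrite /= /origin /= mod0n add0n modn_small.
Qed.

(* A pair (i, b) with i < n encodes the vertex [vtx (i, b)]; [coord_adj] is
   [prism_adj] in these coordinates, with the wrap-around of C_n made explicit
   so that [lia] can decide it. *)
Definition cyc_succ (i j : nat) : bool := (j == i.+1) || (i == n.-1) && (j == 0).

Definition coord_adj (u w : nat * bool) : bool :=
  ((u.2 == w.2) && (cyc_succ u.1 w.1 || cyc_succ w.1 u.1)) ||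
  ((u.1 == w.1) && (u.2 != w.2)).

Lemma eq_succ_mod i j : i < n -> j < n -> (j == i.+1 %% n) = cyc_succ i j.
Proof.
rewrite /cyc_succ => i_lt j_lt; have [Si_lt|Si_n] : i.+1 < n \/ i.+1 = n by lia.
  by rewrite modn_small //; lia.
by rewrite Si_n modnn; lia.
Qed.

Lemma prism_adj_vtx u w : u.1 < n -> w.1 < n ->
  prism_adj n (vtx u) (vtx w) = coord_adj u w.
Proof.
case: u w => [i b] [j d] /= i_lt j_lt.
rewrite /prism_adj /cyc_adj -val_eqE /= (modn_small i_lt) (modn_small j_lt).
by rewrite !eq_succ_mod.
Qed.

Lemma vtx_eq u w : u.1 < n -> w.1 < n -> (vtx u == vtx w) = (u == w).
Proof.
by case: u w => [i b] [j d] /= i_lt j_lt; rewrite !xpair_eqE -val_eqE /= !modn_small.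
Qed.

Lemma vtx_val (x : 'I_n * bool) : vtx (val x.1, x.2) = x.
Proof. by case: x => i b; congr (_, _); apply: val_inj; apply/modn_small/ltn_ord. Qed.

Lemma prism_simple : simple_graph (prism_adj n).
Proof.
split=> [x y|x].
  by rewrite /prism_adj /cyc_adj (eq_sym x.2) (eq_sym x.1) (orbC (val y.1 == _)).
rewrite -[x]vtx_val prism_adj_vtx //= /coord_adj /cyc_succ eqxx /=.
by have := ltn_ord x.1; lia.
Qed.

Definition origin_nbrs : seq ('I_n * bool) :=
  [:: vtx (1, false); vtx (n.-1, false); vtx (0, true)].

Lemma origin_adj (y : 'I_n * bool) : prism_adj n origin y = (y \in origin_nbrs).
Proof.
case: y => i b; have := ltn_ord i; rewrite -[(i, b)]vtx_val /origin !inE /=.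
rewrite prism_adj_vtx ?vtx_eq //=; try lia.
by rewrite !xpair_eqE /coord_adj /cyc_succ /=; case: b => /=; lia.
Qed.

Lemma origin_nbrs_uniq : uniq origin_nbrs.
Proof.
rewrite /= !inE ?vtx_eq //=; try lia.
by rewrite !xpair_eqE /=; lia.
Qed.

Lemma prism_cubic : cubic (prism_adj n).
Proof.
move=> v; rewrite -(turn_origin v) (nbhs_map (turn_bij _ _) (prism_adj_turn _ _)).
rewrite card_imset; last exact/bij_inj/turn_bij.
transitivity #|origin_nbrs|; last exact/card_uniqP/origin_nbrs_uniq.
by apply: eq_card => y; rewrite inE origin_adj.
Qed.

Definition coord_walk (g : nat -> nat * bool) (L : nat) : seq ('I_n * bool) :=
  [seq vtx (g k) | k <- iota 1 L].

Definition coord_trail (g : nat -> nat * bool) (L : nat) : Prop :=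
  [/\ forall k, k <= L -> (g k).1 < n,
      forall k, k < L -> coord_adj (g k) (g k.+1)
    & forall k l, k < l < L ->
        ~~ (((g k == g l) && (g k.+1 == g l.+1)) ||
            ((g k == g l.+1) && (g k.+1 == g l)))].

Definition coord_spanning (g : nat -> nat * bool) (L : nat) : Prop :=
  forall u, u.1 < n -> exists2 k, k <= L & g k = u.

Lemma edge_of_vtx_eqE a b c d : a.1 < n -> b.1 < n -> c.1 < n -> d.1 < n ->
  (edge_of (vtx a) (vtx b) == edge_of (vtx c) (vtx d)) =
  ((a == c) && (b == d)) || ((a == d) && (b == c)).
Proof. by move=> *; rewrite edge_of_eqE !vtx_eq. Qed.

Lemma trail_coord_walk g L :
  coord_trail g L -> trail (prism_adj n) (vtx (g 0)) (coord_walk g L).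
Proof.
case=> g_lt g_adj g_edges; apply: (trail_map_iota (G := fun k => vtx (g k))).
  by move=> k k_lt; rewrite prism_adj_vtx; [exact: g_adj | apply: g_lt; lia ..].
move=> k l kl_L; move: (kl_L) => /andP[lt_kl l_lt].
by rewrite edge_of_vtx_eqE; [exact: g_edges | apply: g_lt; lia ..].
Qed.

Lemma spans_coord_walk g L : coord_spanning g L -> spans (vtx (g 0)) (coord_walk g L).
Proof.
move=> g_onto; apply/forallP => y; rewrite -[y]vtx_val.
have [k k_le <-] := g_onto (val y.1, y.2) (ltn_ord y.1).
change (vtx (g k) \in [seq vtx (g i) | i <- iota 0 L.+1]).
by apply: (map_f (fun i => vtx (g i))); rewrite mem_iota; lia.
Qed.

Lemma mem_coord_walk_edges g L u w : coord_trail g L -> u.1 < n -> w.1 < n ->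
  (edge_of (vtx u) (vtx w) \in walk_edges (vtx (g 0)) (coord_walk g L)) =
  has (fun k => ((g k == u) && (g k.+1 == w)) || ((g k == w) && (g k.+1 == u)))
      (iota 0 L).
Proof.
case=> g_lt _ _ u_lt w_lt; rewrite /walk_edges pairmap_map_iota -has_pred1 has_map.
apply: eq_in_has => k; rewrite mem_iota /= => k_in.
by rewrite edge_of_vtx_eqE //; apply: g_lt; lia.
Qed.

Lemma spanning_trail_coord g L u0 u1 : g 0 = u0 -> g 1 = u1 -> 0 < L ->
  coord_trail g L -> coord_spanning g L ->
  exists p, trail (prism_adj n) (vtx u0) (vtx u1 :: p) /\
    size (vtx u1 :: p) = L /\ spans (vtx u0) (vtx u1 :: p).
Proof.
move=> <- <-; case: L => // L _ g_trail g_onto.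
exists [seq vtx (g k) | k <- iota 2 L].
change (vtx (g 1) :: _) with (coord_walk g L.+1); rewrite size_map size_iota.
by split; [exact: trail_coord_walk | split; last exact: spans_coord_walk].
Qed.

Local Ltac case_ifs := repeat (case: ifP => ?; try (exfalso; lia)).

(* Around the first copy of C_n back to 0, up the rung at 0, along the second
   copy from 0 to n - 1, down the rung at n - 1. *)
Definition cw_walk (k : nat) : nat * bool :=
  if k < n then (k, false) else if k == n then (0, false)
  else if k <= n + n then (k - n.+1, true) else (n.-1, false).

Lemma cw_walk_trail : coord_trail cw_walk (n + n).+1.
Proof.
split=> [k ? | k ? | k l /andP[? ?]]; rewrite /cw_walk; case_ifs;
  rewrite /coord_adj /cyc_succ ?xpair_eqE /=; lia.
Qed.

Lemma cw_walk_spanning : coord_spanning cw_walk (n + n).+1.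
Proof.
case=> i [] /= i_lt; [exists (n.+1 + i) | exists i]; rewrite /cw_walk; try lia;
  case_ifs; congr (_, _); lia.
Qed.

(* The mirror image of [cw_walk] under i |-> -i. *)
Definition ccw_walk (k : nat) : nat * bool :=
  if k == 0 then (0, false) else if k < n then (n - k, false)
  else if k == n then (0, false) else if k == n.+1 then (0, true)
  else if k <= n + n then ((n + n).+1 - k, true) else (1, false).

Lemma ccw_walk_trail : coord_trail ccw_walk (n + n).+1.
Proof.
split=> [k ? | k ? | k l /andP[? ?]]; rewrite /ccw_walk; case_ifs;
  rewrite /coord_adj /cyc_succ ?xpair_eqE /=; lia.
Qed.

Lemma ccw_walk_spanning : coord_spanning ccw_walk (n + n).+1.
Proof.
case=> i [] /= i_lt; case: (posnP i) => [->|i_gt0].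
- by exists n.+1; rewrite /ccw_walk; try lia; case_ifs.
- by exists ((n + n).+1 - i); rewrite /ccw_walk; try lia; case_ifs; congr (_, _); lia.
- by exists 0.
- by exists (n - i); rewrite /ccw_walk; try lia; case_ifs; congr (_, _); lia.
Qed.

(* Up the rung at 0, along the second copy to n - 1, down the rung at n - 1,
   back along the first copy to 0, and on to n - 1. *)
Definition rung_walk (k : nat) : nat * bool :=
  if k == 0 then (0, false) else if k <= n then (k.-1, true)
  else if k <= n + n then (n + n - k, false) else (n.-1, false).

Lemma rung_walk_trail : coord_trail rung_walk (n + n).+1.
Proof.
split=> [k ? | k ? | k l /andP[? ?]]; rewrite /rung_walk; case_ifs;
  rewrite /coord_adj /cyc_succ ?xpair_eqE /=; lia.
Qed.

Lemma rung_walk_spanning : coord_spanning rung_walk (n + n).+1.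
Proof.
case=> i [] /= i_lt; [exists i.+1 | exists (n + n - i)]; rewrite /rung_walk; try lia;
  case_ifs; congr (_, _); lia.
Qed.

Lemma origin_spanning_trails : spanning_trails_at (prism_adj n) (n + n).+1 origin.
Proof.
move=> w; rewrite origin_adj !inE => /or3P[] /eqP->.
- by apply: (spanning_trail_coord _ _ _ cw_walk_trail cw_walk_spanning);
    rewrite /cw_walk; case_ifs.
- by apply: (spanning_trail_coord _ _ _ ccw_walk_trail ccw_walk_spanning);
    rewrite /ccw_walk; case_ifs; rewrite ?subn1.
- by apply: (spanning_trail_coord _ _ _ rung_walk_trail rung_walk_spanning);
    rewrite /rung_walk; case_ifs.
Qed.

Lemma prism_spanning_trails v : spanning_trails_at (prism_adj n) (n + n).+1 v.
Proof.
rewrite -(turn_origin v).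
exact: (spanning_trails_map (turn_bij _ _) (prism_adj_turn _ _) origin_spanning_trails).
Qed.

Lemma prism_longest_trail : longest_trail_length (prism_adj n) (n + n).+1.
Proof.
split.
  exists (vtx (cw_walk 0)), (coord_walk cw_walk (n + n).+1).
  by rewrite size_map size_iota; split=> //; apply: trail_coord_walk cw_walk_trail.
have [adj_sym adj_irr] := prism_simple.
move=> x p /(trail_size_le adj_sym adj_irr (fun v => eq_leq (prism_cubic v))).
by rewrite card_prod card_ord card_bool; lia.
Qed.

(* The trail along [cw_walk] misses the edge between n - 1 and 0 in the second
   copy of C_n. *)
Lemma prism_trail_lt_edges : (n + n).+1 < #|edge_set (prism_adj n)|.
Proof.
have top_edge : edge_of (vtx (n.-1, true)) (vtx (0, true)) \in edge_set (prism_adj n).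
  apply/imsetP; exists (vtx (n.-1, true), vtx (0, true)) => //.
  by rewrite inE /= prism_adj_vtx /coord_adj /cyc_succ //=; lia.
have := trail_size_lt_edges (trail_coord_walk cw_walk_trail) top_edge.
rewrite size_map size_iota; apply.
rewrite (mem_coord_walk_edges cw_walk_trail); try (rewrite /=; lia).
apply/hasPn => k; rewrite mem_iota /cw_walk => ?.
by case_ifs; rewrite !xpair_eqE /=; lia.
Qed.

End Prism.

Theorem lemma2p7 (n : nat) (hn : 3 <= n) :
  simple_graph (prism_adj n) /\ cubic (prism_adj n) /\ admissible (prism_adj n).
Proof.
split; first exact: prism_simple.
split; first exact: prism_cubic.
exists (n + n).+1; split; first exact: prism_longest_trail.
split; first exact: prism_trail_lt_edges.
by move=> v; apply: prism_spanning_trails.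
Qed.
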